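(* Let $G$ and $H$ be finite simple graphs such that $|V(G)| \geq \gamma(G)\gamma(H)$ and $|V(H)| \geq \gamma(G)\gamma(H)$. Then $\gamma(G \square H) \geq \gamma(G)\gamma(H)$.
   Context: All graphs are finite, simple and undirected. For a graph $G=(V,E)$, a subset $S\subseteq V$ dominates $G$ if every vertex of $G$ lies in $S$ or is adjacent to a vertex of $S$ (i.e. the closed neighborhood $N[S]$ equals $V$); the domination number $\gamma(G)$ is the minimum cardinality of a dominating set of $G$. The Cartesian product $G \square H$ has vertex set $V(G)\times V(H)$, with $(u_1,v_1)$ adjacent to $(u_2,v_2)$ if and only if either $v_1=v_2$ and $u_1u_2\in E(G)$, or $u_1=u_2$ and $v_1v_2\in E(H)$. *)

From mathcomp Require Import all_boot.
Set Implicit Arguments. Unset Strict Implicit. Unset Printing Implicit Defensive.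

Definition simple_graph (T : finType) (e : rel T) : Prop :=
  symmetric e /\ irreflexive e.

Definition dominating (T : finType) (e : rel T) (S : {set T}) : bool :=
  [forall v, (v \in S) || [exists u in S, e v u]].

(* Domination number: minimum cardinality of a dominating set
   (setT always dominates, so the minimum is attained; the neutral
   element #|T| = #|setT| is therefore harmless). *)
Definition domination_number (T : finType) (e : rel T) : nat :=
  \big[minn/#|T|]_(S : {set T} | dominating e S) #|S|.

Definition cart_prod (T U : finType) (eG : rel T) (eH : rel U) : rel (T * U) :=
  fun x y => ((x.2 == y.2) && eG x.1 y.1) || ((x.1 == y.1) && eH x.2 y.2).

From mathcomp Require Import all_boot.

(* A dominating set S of G □ H with |S| < |V(G)| and |S| < |V(H)| misses some
   column {g} × V(H) and some row V(G) × {h} entirely; the vertex (g, h) is then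
   neither in S nor adjacent to it, since its neighbours lie in that row or column.
   Hence γ(G □ H) >= min(|V(G)|, |V(H)|) >= γ(G) γ(H). *)

Lemma exists_notin_imset {A B : finType} (f : A -> B) {S : {set A}} :
  #|S| < #|B| -> exists b, b \notin f @: S.
Proof.
move=> ltSB.
have : ~~ ([set: B] \subset f @: S).
  apply: contraTN ltSB => /subset_leq_card; rewrite cardsT -leqNgt => leBf.
  exact: leq_trans leBf (leq_imset_card _ _).
by case/subsetPn=> b _ bNf; exists b.
Qed.

Lemma dominating_cart_prod_card (T U : finType) (eG : rel T) (eH : rel U)
    (S : {set T * U}) :
  dominating (cart_prod eG eH) S -> minn #|T| #|U| <= #|S|.
Proof.
move=> /forallP domS; rewrite leqNgt leq_min; apply/negP => /andP [ltST ltSU].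
have [g gNS] := exists_notin_imset (fun x : T * U => x.1) ltST.
have [h hNS] := exists_notin_imset (fun x : T * U => x.2) ltSU.
case/orP: (domS (g, h)) => [ghS | /existsP [u /andP [uS]]].
  by move: gNS; rewrite (imset_f (fun x : T * U => x.1) ghS).
rewrite /cart_prod /= => /orP [/andP [/eqP hu _] | /andP [/eqP gu _]].
  by move: hNS; rewrite hu (imset_f (fun x : T * U => x.2) uS).
by move: gNS; rewrite gu (imset_f (fun x : T * U => x.1) uS).
Qed.

Lemma domination_number_lb (T : finType) (e : rel T) (k : nat) :
  k <= #|T| -> (forall S, dominating e S -> k <= #|S|) ->
  k <= domination_number e.
Proof.
move=> lekT lekS; apply: (big_ind (fun x => k <= x)) => // x y.
by rewrite leq_min => -> ->.
Qed.

Theorem mainTheorem1 (T U : finType) (eG : rel T) (eH : rel U) :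
  simple_graph eG -> simple_graph eH ->
  domination_number eG * domination_number eH <= #|T| ->
  domination_number eG * domination_number eH <= #|U| ->
  domination_number eG * domination_number eH <= domination_number (cart_prod eG eH).
Proof.
move=> _ _; set k := _ * _ => lekT lekU.
apply: domination_number_lb => [|S /dominating_cart_prod_card].
  rewrite card_prod; case: (posnP #|U|) => [U0 | U0].
    by move: lekU; rewrite U0 leqn0 => /eqP ->.
  exact: leq_trans lekT (leq_pmulr _ U0).
by apply: leq_trans; rewrite leq_min lekT lekU.
Qed.
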